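(* Consider the decentralized caching problem with $N$ files and local cache size of $M$ files per user, with $0<M\le N$. For every file size $F$, every $\epsilon>0$, every number $K$ of requesting users and every statistics $\boldsymbol{s}$ of demands in $\{1,\dots,N\}^K$, $$\min_{P_{\mathcal{M}}}R^*_{\epsilon,K}(\boldsymbol{s},P_{\mathcal{M}})\ \ge\ \frac{N-M}{M}\left(1-\left(1-\frac{M}{N}\right)^{N_{\mathrm{e}}(\boldsymbol{s})}\right)-\left(\frac{1}{F}+N_{\mathrm{e}}^2(\boldsymbol{s})\epsilon\right),$$ where the minimum is over all prefetching distributions $P_{\mathcal{M}}$.
   Context: Setting: $N$ files of $F$ bits each, all bits i.i.d. Bernoulli$(1/2)$. A prefetching distribution $P_{\mathcal{M}}$ is a probability distribution on sets of at most $MF$ bit indices; with $K$ requesting users, cache index sets $\mathcal{M}_1,\dots,\mathcal{M}_K$ are drawn i.i.d. from $P_{\mathcal{M}}$ and user $k$ stores the indexed bits uncoded. For a deterministic prefetching $\boldsymbol{\mathcal{M}}$ and demand $\boldsymbol{d}\in\{1,\dots,N\}^K$, a rate $R$ is $\epsilon$-achievable if there are an encoder $X=\psi(W_1,\dots,W_N)\in\{0,1\}^{RF}$ and decoders such that each user $k$ recovers $W_{d_k}$ from $X$ and its cached bits with error probability at most $\epsilon$. Given $P_{\mathcal{M}}$ and $\boldsymbol{d}$, $R$ is $\epsilon$-achievable if for every realization $\boldsymbol{\mathcal{M}}$ there is $\epsilon_{\boldsymbol{\mathcal{M}}}$ with $R$ $\epsilon_{\boldsymbol{\mathcal{M}}}$-achievable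 given $\boldsymbol{\mathcal{M}},\boldsymbol{d}$ and $\mathbb{E}[\epsilon_{\boldsymbol{\mathcal{M}}}]\le\epsilon$; $R^*_{\epsilon,K}(\boldsymbol{d},P_{\mathcal{M}})$ is the minimum such rate. The statistics $\boldsymbol{s}(\boldsymbol{d})$ of a demand is the length-$N$ array, sorted nonincreasingly, whose $i$-th entry is the number of users requesting the $i$-th most requested file; $\mathcal{D}_{\boldsymbol{s}}$ is the set of demands with statistics $\boldsymbol{s}$; $N_{\mathrm{e}}(\boldsymbol{s})$ is the number of distinct requested files. $R^*_{\epsilon,K}(\boldsymbol{s},P_{\mathcal{M}})=\frac{1}{|\mathcal{D}_{\boldsymbol{s}}|}\sum_{\boldsymbol{d}\in\mathcal{D}_{\boldsymbol{s}}}R^*_{\epsilon,K}(\boldsymbol{d},P_{\mathcal{M}})$. *)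

From HB Require Import structures.
From mathcomp Require Import all_boot all_order all_algebra.
From mathcomp Require Import boolp classical_sets reals.
Set Implicit Arguments. Unset Strict Implicit. Unset Printing Implicit Defensive.
Import Order.TTheory GRing.Theory Num.Theory.
Local Open Scope ring_scope.

Definition bitidx (N F : nat) := ('I_N * 'I_F)%type.
Definition library (N F : nat) := {ffun bitidx N F -> bool}.
Definition file_of N F (W : library N F) (n : 'I_N) : {ffun 'I_F -> bool} :=
  [ffun j => W (n, j)].
Definition cached N F (A : {set bitidx N F}) (W : library N F) : library N F :=
  [ffun i => if i \in A then W i else false].

Definition prefetching (N F K : nat) := {ffun 'I_K -> {set bitidx N F}}.
Definition demand (N K : nat) := {ffun 'I_K -> 'I_N}.

(* Error probability of user k: the library bits are i.i.d. Bernoulli(1/2),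
   i.e. W is uniform on {0,1}^(N F). *)
Definition err_prob N F K (L : nat) (Mp : prefetching N F K) (d : demand N K)
  (enc : library N F -> {ffun 'I_L -> bool})
  (dec : 'I_K -> {ffun 'I_L -> bool} -> library N F -> {ffun 'I_F -> bool})
  (k : 'I_K) {R : realType} : R :=
  (#|[set W : library N F |
      dec k (enc W) (cached (Mp k) W) != file_of W (d k)]|%:R)
  / (#|{: library N F}|%:R).

Definition achievable_det {R : realType} N F K (Mp : prefetching N F K)
  (d : demand N K) (Rt e : R) : Prop :=
  exists L : nat, (L%:R <= Rt * F%:R) /\
  exists (enc : library N F -> {ffun 'I_L -> bool})
         (dec : 'I_K -> {ffun 'I_L -> bool} -> library N F -> {ffun 'I_F -> bool}),
    forall k : 'I_K, err_prob Mp d enc dec k <= e.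

Definition is_prefetch_dist {R : realType} (N F : nat) (M : R)
  (P : {set bitidx N F} -> R) : Prop :=
  (forall A, 0 <= P A) /\ (\sum_(A : {set bitidx N F}) P A = 1) /\
  (forall A, 0 < P A -> #|A|%:R <= M * F%:R).

Definition prob_real {R : realType} N F K (P : {set bitidx N F} -> R)
  (Mp : prefetching N F K) : R := \prod_(k < K) P (Mp k).

Definition achievable {R : realType} N F K (P : {set bitidx N F} -> R)
  (d : demand N K) (Rt e : R) : Prop :=
  exists epsM : prefetching N F K -> R,
    (forall Mp, achievable_det Mp d Rt (epsM Mp)) /\
    \sum_(Mp : prefetching N F K) prob_real P Mp * epsM Mp <= e.

Definition Rstar_d {R : realType} N F K (P : {set bitidx N F} -> R)
  (d : demand N K) (e : R) : R :=
  inf [set Rt | achievable P d Rt e].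

Definition stats N K (d : demand N K) : seq nat :=
  sort geq [seq #|[set k | d k == n]| | n <- enum 'I_N].

Definition demands_of N K (s : seq nat) : {set demand N K} :=
  [set d | stats d == s].

Definition Ne (s : seq nat) : nat := count (fun x => 0 < x)%N s.

Definition Rstar_s {R : realType} N F K (P : {set bitidx N F} -> R)
  (s : seq nat) (e : R) : R :=
  (\sum_(d in demands_of N K s) Rstar_d P d e) / #|demands_of N K s|%:R.
Arguments Rstar_s {R N F} K P s e.

From HB Require Import structures.
From mathcomp Require Import all_boot all_order all_algebra.
From mathcomp Require Import boolp classical_sets reals.
From mathcomp Require Import ring lra zify.
Set Implicit Arguments. Unset Strict Implicit. Unset Printing Implicit Defensive.
Import Order.TTheory GRing.Theory Num.Theory.
Local Open Scope ring_scope.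

(* Fix users u_0, ..., u_(n-1) requesting the n distinct files, and let U be the
   set of bits of file d (u_i) cached by none of u_0, ..., u_i.  Given the
   message X and the library outside U, the users u_0, u_1, ... decode in turn,
   so a counting argument gives L >= |U| - 1 - n^2 eps F.  With i.i.d. caches a
   bit b of file d (u_i) lies in U with probability q_b^(i+1), where q_b is the
   probability that b is not cached.  Averaging over the N cyclic relabellings
   of the files, which preserve the demand statistics, replaces the bits of the
   requested files by all N F bits; since the q_b average at least 1 - M/N,
   convexity gives sum_b q_b^(i+1) >= N F (1 - M/N)^(i+1), and the geometric
   sum over i < N_e yields the bound. *)

Lemma file_ofE N F (W : library N F) (b : bitidx N F) : file_of W b.1 b.2 = W b.
Proof. by rewrite ffunE -surjective_pairing. Qed.

Section CutSet.
Variables (N F K : nat) (Mp : prefetching N F K) (d : demand N K).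
Variables (n : nat) (u : 'I_n -> 'I_K).

Definition uncached_bits : {set bitidx N F} :=
  [set b | [exists i : 'I_n, (b.1 == d (u i)) &&
     [forall i' : 'I_n, (i' <= i)%N ==> (b \notin Mp (u i'))]]].

Lemma card_uncached_bits : (#|uncached_bits| <= n * F)%N.
Proof.
apply: (@leq_trans #|finset.setX [set d (u i) | i : 'I_n] [set: 'I_F]|).
  apply: subset_leq_card; apply/fintype.subsetP => -[b1 b2].
  rewrite !inE /= => /existsP [i /andP [/eqP -> _]].
  by rewrite andbT; apply/imsetP; exists i.
rewrite cardsX cardsT card_ord leq_mul2r.
by rewrite (leq_trans (leq_imset_card _ _)) ?cardT ?size_enum_ord ?orbT.
Qed.

Variables (L : nat) (enc : library N F -> {ffun 'I_L -> bool})
  (dec : 'I_K -> {ffun 'I_L -> bool} -> library N F -> {ffun 'I_F -> bool}).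

Definition decoding_errors (k : 'I_K) : {set library N F} :=
  [set W | dec k (enc W) (cached (Mp k) W) != file_of W (d k)].

Definition decoded_by_all : {set library N F} :=
  [set W | [forall i : 'I_n, W \notin decoding_errors (u i)]].

(* Users u 0, u 1, ... decode their files in turn: every bit cached by u i
   is either outside uncached_bits or belongs to a file decoded earlier. *)
Lemma decoded_by_all_inj :
  {in decoded_by_all &,
    injective (fun W => (enc W, cached (~: uncached_bits) W))}.
Proof.
move=> W1 W2; rewrite !inE => /forallP ok1 /forallP ok2 [enc12 cached12].
have out_eq b : b \notin uncached_bits -> W1 b = W2 b.
  by move=> bU; move/ffunP/(_ b): cached12; rewrite !ffunE inE bU.
have files_eq m (i : 'I_n) : (i < m)%N -> file_of W1 (d (u i)) = file_of W2 (d (u i)).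
  elim: m i => [//|m IH] i lt_im.
  move: (ok1 i) (ok2 i); rewrite !inE !negbK => /eqP <- /eqP <-; rewrite enc12.
  congr (dec _ _ _); apply/ffunP => b; rewrite !ffunE; case: ifP => // bM.
  have [|/out_eq //] := boolP (b \in uncached_bits).
  rewrite inE => /existsP [i' /andP [/eqP b1 /forallP first_miss]].
  have lt_i'i : (i' < i)%N.
    by rewrite ltnNge; apply/negP => le_ii'; move: (first_miss i); rewrite le_ii' bM.
  by rewrite -!file_ofE b1 IH // (leq_trans lt_i'i).
apply/ffunP => b; have [|/out_eq //] := boolP (b \in uncached_bits).
rewrite inE => /existsP [i /andP [/eqP b1 _]].
by rewrite -!file_ofE b1 (files_eq i.+1).
Qed.

Lemma card_decoded_by_all :
  (#|decoded_by_all| <= 2 ^ L * 2 ^ #|~: uncached_bits|)%N.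
Proof.
rewrite -(card_in_imset decoded_by_all_inj).
pose Outside := [set W : library N F | W \in pffun_on false (~: uncached_bits) predT].
have <- : #|finset.setX [set: {ffun 'I_L -> bool}] Outside|
          = (2 ^ L * 2 ^ #|~: uncached_bits|)%N.
  by rewrite cardsX cardsT card_ffun card_ord card_bool cardsE card_pffun_on card_bool.
apply: subset_leq_card; apply/fintype.subsetP => _ /imsetP [W _ ->].
rewrite !inE /=; apply/pffun_onP; split => //.
by apply/fintype.subsetP => b; rewrite !inE ffunE; case: ifP => // + _; rewrite !inE.
Qed.

Lemma card_not_decoded_by_all :
  (#|~: decoded_by_all| <= \sum_(i < n) #|decoding_errors (u i)|)%N.
Proof.
rewrite -sum1_card.
under [X in (_ <= X)%N]eq_bigr => i _ do rewrite -sum1_card big_mkcond /=.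
rewrite exchange_big /= [X in (X <= _)%N]big_mkcond /=.
apply: leq_sum => W _; case: ifP => //.
rewrite finset.in_setC inE negb_forall => /existsP [i]; rewrite negbK => err_i.
by rewrite (bigD1 i) //= err_i leq_addr.
Qed.

End CutSet.

(* A logarithm-free substitute for  t <= L + log2 (2 ^ (t + C) / G). *)
Lemma leq_mul_card_expn (G t C L : nat) :
  (G <= 2 ^ (t + C))%N -> (G <= 2 ^ L * 2 ^ C)%N ->
  (G * t <= (L + 1) * 2 ^ (t + C))%N.
Proof.
move=> le_G_tC le_G_LC; have [le_tL|lt_Lt] := leqP t L.
  by rewrite mulnC; apply: leq_mul => //; lia.
have t_le : (t <= (L + 1) * 2 ^ (t - L))%N.
  by have := ltn_expl (t - L) (ltnSn 1); nia.
have -> : (2 ^ (t + C) = 2 ^ L * 2 ^ C * 2 ^ (t - L))%N.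
  by rewrite -!expnD; congr (2 ^ _)%N; lia.
by apply: leq_trans (leq_mul le_G_LC t_le) _; rewrite mulnCA.
Qed.

Lemma card_uncached_bits_le_rate (R : realType) N F K L (Mp : prefetching N F K)
    (d : demand N K) n (u : 'I_n -> 'I_K) enc dec (eps : R) :
  (forall k, err_prob (L:=L) Mp d enc dec k <= eps) ->
  #|uncached_bits Mp d u|%:R - 1 - n%:R ^+ 2 * eps * F%:R <= L%:R.
Proof.
move=> err_le.
set U := uncached_bits Mp d u; set G := decoded_by_all Mp d u enc dec.
set T := #|{: library N F}|.
have TE : T = (2 ^ (#|U| + #|~: U|))%N by rewrite /T card_ffun card_bool cardsC.
have T_gt0 : 0 < T%:R :> R by rewrite ltr0n TE expn_gt0.
have GU : #|G|%:R * #|U|%:R <= (L%:R + 1) * T%:R :> R.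
  rewrite -natrM -[1]/(1%:R) -natrD -natrM ler_nat TE.
  by rewrite leq_mul_card_expn // ?card_decoded_by_all // -TE max_card.
have errors_le i : #|decoding_errors Mp d enc dec (u i)|%:R <= eps * T%:R.
  by rewrite -ler_pdivrMr //; exact: err_le.
have not_G : #|~: G|%:R <= n%:R * eps * T%:R.
  apply: (le_trans (y := (\sum_(i < n) #|decoding_errors Mp d enc dec (u i)|)%N%:R)).
    by rewrite ler_nat card_not_decoded_by_all.
  rewrite natr_sum -mulrA mulr_natl -[n in _ *+ n]card_ord -sumr_const.
  exact: ler_sum.
have GT : #|G|%:R + #|~: G|%:R = T%:R :> R by rewrite -natrD cardsC.
have Un : #|U|%:R <= n%:R * F%:R :> R by rewrite -natrM ler_nat card_uncached_bits.
rewrite -(ler_pM2l T_gt0).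
have not_G_U : #|~: G|%:R * #|U|%:R <= n%:R * eps * T%:R * (n%:R * F%:R) :> R.
  apply: le_trans (ler_wpM2l (ler0n _ _) Un) _.
  by apply: ler_wpM2r; rewrite ?mulr_ge0.
rewrite expr2; nra.
Qed.

Lemma card_ord_leq n (i : 'I_n) : #|[set i' : 'I_n | (i' <= i)%N]| = i.+1.
Proof.
have -> : [set i' : 'I_n | (i' <= i)%N] = widen_ord (ltn_ord i) @: [set: 'I_i.+1].
  apply/setP => x; rewrite !inE; apply/idP/imsetP => [le_xi|[y _ ->]].
    by exists (Ordinal (le_xi : (x < i.+1)%N)) => //; apply: val_inj.
  by rewrite /= -ltnS.
by rewrite card_imset ?cardsT ?card_ord // => x y /(congr1 val) /= /val_inj.
Qed.

Lemma sum_file_bits (V : nmodType) N F (f : bitidx N F -> V) (a : 'I_N) :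
  \sum_(b | b.1 == a) f b = \sum_(j < F) f (a, j).
Proof.
rewrite big_mkcond /=.
transitivity (\sum_(b1 : 'I_N) \sum_(b2 : 'I_F) if b1 == a then f (b1, b2) else 0).
  by rewrite pair_bigA; apply: eq_bigr => -[].
rewrite (bigD1 a) //= eqxx [X in _ + X]big1 ?addr0 // => x /negbTE x_neq_a.
by under eq_bigr do rewrite x_neq_a; rewrite big1.
Qed.

Lemma natr_forall (R : pzSemiRingType) (I : finType) (Q B : pred I) :
  ([forall (i | Q i), B i])%:R = \prod_(i | Q i) (B i)%:R :> R.
Proof.
rewrite -big_andE -natr_prod.
by rewrite (big_morph nat_of_bool (fun b1 b2 => esym (mulnb b1 b2)) (erefl : true = 1 :> nat)).
Qed.

Lemma natr_exists_uniq (R : pzSemiRingType) (I : finType) (Q : pred I) :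
  {in Q &, forall i j, i = j} -> ([exists i, Q i])%:R = \sum_i (Q i)%:R :> R.
Proof.
move=> Q_uniq; have [[i Qi]|] := existsP.
  rewrite (bigD1 i) //= Qi big1 ?addr0 // => j j_neq_i.
  by case: (boolP (Q j)) => // Qj; case/eqP: j_neq_i; exact: Q_uniq.
by move=> no_Q; rewrite big1 // => i _; case: (boolP (Q i)) => // Qi; case: no_Q; exists i.
Qed.

Section UncachedBitsCount.
Variables (R : pzSemiRingType) (N F K : nat) (Mp : prefetching N F K) (d : demand N K).
Variables (n : nat) (u : 'I_n -> 'I_K).

Lemma card_uncached_bitsE : injective (fun i => d (u i)) ->
  #|uncached_bits Mp d u|%:R
    = \sum_(i < n) \sum_(j < F)
        \prod_(i' < n | (i' <= i)%N) ((d (u i), j) \notin Mp (u i'))%:R :> R.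
Proof.
move=> du_inj; rewrite -sum1_card natr_sum big_mkcond /=.
transitivity (\sum_(b : bitidx N F) \sum_(i < n)
  ((b.1 == d (u i)) && [forall (i' : 'I_n | (i' <= i)%N), b \notin Mp (u i')])%:R : R).
  apply: eq_bigr => b _; rewrite inE -natr_exists_uniq; first by case: existsP.
  by move=> i i' /andP [/eqP -> _] /andP [/eqP /du_inj].
rewrite exchange_big; apply: eq_bigr => i _.
rewrite (eq_bigr (fun b => if b.1 == d (u i) then
  ([forall (i' : 'I_n | (i' <= i)%N), b \notin Mp (u i')])%:R else 0)).
  by rewrite -big_mkcond sum_file_bits; apply: eq_bigr => j _; rewrite natr_forall.
by move=> b _; case: eqP.
Qed.

End UncachedBitsCount.

Section RandomCaches.
Variables (R : realType) (N F K : nat) (P : {set bitidx N F} -> R).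
Hypothesis P_ge0 : forall A, 0 <= P A.
Hypothesis P_sum1 : \sum_A P A = 1.

Lemma prob_real_ge0 (Mp : prefetching N F K) : 0 <= prob_real P Mp.
Proof. exact: prodr_ge0. Qed.

Lemma expect_prod_caches (S : {set 'I_K}) (g : {set bitidx N F} -> R) :
  \sum_(Mp : prefetching N F K) prob_real P Mp * \prod_(k in S) g (Mp k)
  = (\sum_A P A * g A) ^+ #|S|.
Proof.
rewrite -prodr_const.
transitivity (\prod_(k < K) \sum_A P A * (if k \in S then g A else 1)).
  rewrite (bigA_distr_bigA (fun k A => P A * (if k \in S then g A else 1))) /=.
  by apply: eq_bigr => Mp _; rewrite /prob_real big_split /= [X in _ * X]big_mkcond.
rewrite [RHS]big_mkcond; apply: eq_bigr => k _; case: ifP => // _.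
by under eq_bigr do rewrite mulr1.
Qed.

Lemma sum_prob_real : \sum_(Mp : prefetching N F K) prob_real P Mp = 1.
Proof.
have := expect_prod_caches finset.set0 (fun=> 1); rewrite cards0 expr0.
by move=> <-; apply: eq_bigr => Mp _; rewrite big_set0 mulr1.
Qed.

Lemma expect_card_uncached_le_rate (d : demand N K) (Rt e : R) n (u : 'I_n -> 'I_K) :
  achievable P d Rt e ->
  \sum_(Mp : prefetching N F K) prob_real P Mp * #|uncached_bits Mp d u|%:R
    - 1 - n%:R ^+ 2 * e * F%:R <= Rt * F%:R.
Proof.
move=> [epsM [achM sum_epsM]].
have rate_Mp Mp : #|uncached_bits Mp d u|%:R - 1 - n%:R ^+ 2 * epsM Mp * F%:R <= Rt * F%:R.
  have [L [le_L [enc [dec err_le]]]] := achM Mp.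
  exact: le_trans (card_uncached_bits_le_rate u err_le) le_L.
have : \sum_(Mp : prefetching N F K) prob_real P Mp *
           (#|uncached_bits Mp d u|%:R - 1 - n%:R ^+ 2 * epsM Mp * F%:R)
         <= \sum_(Mp : prefetching N F K) prob_real P Mp * (Rt * F%:R).
  by apply: ler_sum => Mp _; apply: ler_wpM2l; [exact: prob_real_ge0|exact: rate_Mp].
rewrite -mulr_suml sum_prob_real mul1r; apply: le_trans.
rewrite [X in _ <= X](eq_bigr (fun Mp =>
    prob_real P Mp * #|uncached_bits Mp d u|%:R - prob_real P Mp
    - n%:R ^+ 2 * F%:R * (prob_real P Mp * epsM Mp))); last by move=> Mp _; ring.
rewrite !sumrB sum_prob_real -mulr_sumr lerD2l lerN2.
by rewrite mulrAC; apply: ler_wpM2r => //; apply: ler_wpM2l; rewrite ?exprn_ge0.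
Qed.

Lemma achievable_uncoded (d : demand N K) (e : R) : 0 <= e -> achievable P d N%:R e.
Proof.
move=> e_ge0; exists (fun _ => 0); split; last by rewrite big1 // => Mp _; rewrite mulr0.
move=> Mp; exists #|{: bitidx N F}|; split; first by rewrite card_prod !card_ord natrM.
exists (fun W : library N F => [ffun i => W (enum_val i)]).
exists (fun k (X : {ffun 'I_#|{: bitidx N F}| -> bool}) _ =>
  [ffun j => X (enum_rank (d k, j))]).
move=> k; rewrite /err_prob.
suff -> : [set W : library N F | [ffun j => [ffun i => W (enum_val i)] (enum_rank (d k, j))]
    != file_of W (d k)] = finset.set0 by rewrite cards0 mul0r.
apply/setP => W; rewrite !inE; apply/negbTE; rewrite negbK.
by apply/eqP/ffunP => j; rewrite !ffunE enum_rankK.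
Qed.

Lemma Rstar_d_ge (d : demand N K) (e : R) n (u : 'I_n -> 'I_K) :
  0 <= e -> (0 < F)%N ->
  (\sum_(Mp : prefetching N F K) prob_real P Mp * #|uncached_bits Mp d u|%:R) / F%:R
    - F%:R^-1 - n%:R ^+ 2 * e <= Rstar_d P d e.
Proof.
move=> e_ge0 F_gt0; have F_pos : 0 < F%:R :> R by rewrite ltr0n.
apply: lb_le_inf; first by exists N%:R; exact: achievable_uncoded.
move=> Rt /(expect_card_uncached_le_rate u) le_rate.
rewrite -(ler_pM2r F_pos); apply: le_trans le_rate.
by rewrite !mulrBl divfK ?mulVf ?gt_eqF // mulrAC.
Qed.

Definition miss_prob (b : bitidx N F) : R := \sum_A P A * (b \notin A)%:R.

Lemma expect_card_uncached_bits (d : demand N K) n (u : 'I_n -> 'I_K) :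
  injective (fun i => d (u i)) ->
  \sum_(Mp : prefetching N F K) prob_real P Mp * #|uncached_bits Mp d u|%:R
    = \sum_(i < n) \sum_(j < F) miss_prob (d (u i), j) ^+ i.+1.
Proof.
move=> du_inj; have u_inj : injective u by move=> i i' /(congr1 d) /du_inj.
under eq_bigr do rewrite card_uncached_bitsE // mulr_sumr.
rewrite exchange_big; apply: eq_bigr => i _.
under eq_bigr do rewrite mulr_sumr.
rewrite exchange_big; apply: eq_bigr => j _.
rewrite -(card_ord_leq i) -(card_imset _ u_inj) -expect_prod_caches.
apply: eq_bigr => Mp _; rewrite big_imset /=; last by move=> ? ? _ _ /u_inj.
by congr (_ * _); apply: eq_bigl => i'; rewrite inE.
Qed.

Lemma sum_miss_prob_ge (M : R) : (forall A, 0 < P A -> #|A|%:R <= M * F%:R) ->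
  N%:R * F%:R - M * F%:R <= \sum_b miss_prob b.
Proof.
move=> P_size; rewrite exchange_big /=.
rewrite -[X in X <= _]mul1r -[X in X * _ <= _]P_sum1 mulr_suml.
apply: ler_sum => A _; rewrite -mulr_sumr.
have [->|P_neq0] := eqVneq (P A) 0; first by rewrite !mul0r.
have P_gt0 : 0 < P A by rewrite lt_def P_neq0 P_ge0.
have -> : \sum_b (b \notin A)%:R = (N * F)%:R - #|A|%:R :> R.
  have card_A : (#|A| + #|~: A| = N * F)%N by rewrite cardsC card_prod !card_ord.
  rewrite -card_A natrD addrC addKr -sum1_card natr_sum [RHS]big_mkcond /=.
  by apply: eq_bigr => b _; rewrite !inE; case: (b \in A).
rewrite natrM; apply: ler_wpM2l; first exact: ltW.
by rewrite lerD2l lerN2 P_size.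
Qed.

End RandomCaches.

Lemma exprS_ge_tangent (R : realDomainType) (x c : R) i : 0 <= x -> 0 <= c ->
  c ^+ i.+1 + i.+1%:R * c ^+ i * (x - c) <= x ^+ i.+1.
Proof.
move=> x_ge0 c_ge0; elim: i => [|i IH]; first by rewrite expr0 !expr1 mulr1 mul1r addrC subrK.
have ci_ge0 : 0 <= c ^+ i by apply: exprn_ge0.
have i_ge0 : 0 <= i%:R :> R by rewrite ler0n.
apply: le_trans (ler_wpM2l x_ge0 IH).
rewrite [c ^+ i.+2]exprS [c ^+ i.+1]exprS -[i.+2]addn1 -[i.+1]addn1 !natrD.
set a := c ^+ i in ci_ge0 *; set m := i%:R in i_ge0 *.
have : 0 <= (m + 1) * a * (x - c) ^+ 2 by rewrite mulr_ge0 ?sqr_ge0 ?mulr_ge0 ?addr_ge0.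
nra.
Qed.

Lemma sum_exprS_ge (R : realDomainType) (I : finType) (q : I -> R) (c : R) i :
  (forall b, 0 <= q b) -> 0 <= c -> #|I|%:R * c <= \sum_b q b ->
  #|I|%:R * c ^+ i.+1 <= \sum_b q b ^+ i.+1.
Proof.
move=> q_ge0 c_ge0 sum_q_ge.
apply: le_trans (ler_sum _ (fun b _ => exprS_ge_tangent i (q_ge0 b) c_ge0)).
rewrite big_split /= sumr_const -mulr_sumr mulr_natl -[X in X <= _]addr0 lerD2l.
rewrite mulr_ge0 ?mulr_ge0 ?exprn_ge0 ?ler0n //.
by rewrite sumrB sumr_const subr_ge0 -mulr_natl.
Qed.

Lemma sum_exprS_geom (R : fieldType) (c : R) n : c != 1 ->
  \sum_(i < n) c ^+ i.+1 = c * (1 - c ^+ n) / (1 - c).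
Proof.
move=> c_neq1; have c1_neq0 : 1 - c != 0 by rewrite subr_eq0 eq_sym.
under eq_bigr do rewrite exprS; rewrite -mulr_sumr -mulrA; congr (_ * _).
apply: (mulIf c1_neq0); rewrite divfK //.
by rewrite -[RHS]opprB subrX1 -mulNr opprB mulrC.
Qed.

Lemma sort_geq_perm (s1 s2 : seq nat) : perm_eq s1 s2 -> sort geq s1 = sort geq s2.
Proof.
move/perm_sortP; apply.
- by move=> x y; apply: leq_total.
- by move=> y x z le_yx le_zy; apply: leq_trans le_zy le_yx.
- by move=> x y /andP [le_yx le_xy]; apply/anti_leq/andP.
Qed.

Lemma Ne_stats N K (d : demand N K) : Ne (stats d) = #|[set d k | k in 'I_K]|.
Proof.
rewrite /Ne /stats count_sort count_map.
rewrite -sum1_count big_enum_cond /= sum1_card.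
apply: eq_card => i; rewrite unfold_in /= -[eqn _ _]/(0 < _)%N card_gt0; apply/set0Pn/imsetP.
  by case=> k; rewrite inE => /eqP <-; exists k.
by case=> k _ ->; exists k; rewrite inE.
Qed.

Lemma exists_distinct_requesters N K (d : demand N K) :
  exists u : 'I_(Ne (stats d)) -> 'I_K, injective (fun i => d (u i)).
Proof.
rewrite Ne_stats.
have requested (i : 'I_#|[set d k | k in 'I_K]|) : exists k, d k == enum_val i.
  by case/imsetP: (enum_valP i) => k _ ->; exists k.
exists (fun i => xchoose (requested i)) => i j.
by rewrite (eqP (xchooseP (requested i))) (eqP (xchooseP (requested j))); apply: enum_val_inj.
Qed.

Definition shift_demand N K (t : 'I_N.+1) (d : demand N.+1 K) : demand N.+1 K :=
  [ffun k => d k + t].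

Lemma shift_demand_inj N K (t : 'I_N.+1) : injective (@shift_demand N K t).
Proof.
by move=> d1 d2 /ffunP eq12; apply/ffunP => k; move: (eq12 k); rewrite !ffunE => /addIr.
Qed.

Lemma stats_shift_demand N K t (d : demand N.+1 K) : stats (shift_demand t d) = stats d.
Proof.
rewrite /stats; apply: sort_geq_perm.
have -> : [seq #|[set k | shift_demand t d k == i]| | i <- enum 'I_N.+1] =
    [seq #|[set k | d k == i]| | i <- [seq i - t | i <- enum 'I_N.+1]].
  rewrite -[in RHS]map_comp; apply: eq_map => i /=; apply: eq_card => k.
  by rewrite !inE ffunE; apply/eqP/eqP => [<-|->]; rewrite ?addrK ?subrK.
apply: perm_map; apply: uniq_perm.
- by rewrite map_inj_uniq ?enum_uniq // => i j /addIr.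
- exact: enum_uniq.
- by move=> i; rewrite mem_enum; apply/mapP; exists (i + t); rewrite ?mem_enum ?addrK.
Qed.

Lemma sum_shift_demands (V : nmodType) N K (s : seq nat) (f : demand N.+1 K -> V) :
  \sum_(d in demands_of N.+1 K s) \sum_(t : 'I_N.+1) f (shift_demand t d)
  = (\sum_(d in demands_of N.+1 K s) f d) *+ N.+1.
Proof.
rewrite exchange_big /= (eq_bigr (fun _ => \sum_(d in demands_of N.+1 K s) f d)).
  by rewrite sumr_const card_ord.
move=> t _; rewrite [RHS](reindex_inj (@shift_demand_inj N K t)) /=.
by apply: eq_bigl => d; rewrite !inE stats_shift_demand.
Qed.

Lemma sum_shift_file_bits (V : nmodType) N F (f : bitidx N.+1 F -> V) (a : 'I_N.+1) :
  \sum_(t : 'I_N.+1) \sum_(j < F) f (a + t, j) = \sum_b f b.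
Proof.
transitivity (\sum_(x : 'I_N.+1) \sum_(j < F) f (x, j)).
  by rewrite [RHS](reindex_inj (addrI a)).
by rewrite pair_bigA; apply: eq_bigr => -[].
Qed.

Section ShiftedDemands.
Variables (R : realType) (N F K : nat) (M : R) (P : {set bitidx N.+1 F} -> R).
Hypothesis P_ge0 : forall A, 0 <= P A.
Hypothesis P_sum1 : \sum_A P A = 1.
Hypothesis P_size : forall A, 0 < P A -> #|A|%:R <= M * F%:R.

Lemma sum_shift_expect_card_uncached_bits (d : demand N.+1 K) n (u : 'I_n -> 'I_K) :
  injective (fun i => d (u i)) ->
  \sum_(t : 'I_N.+1) \sum_(Mp : prefetching N.+1 F K)
      prob_real P Mp * #|uncached_bits Mp (shift_demand t d) u|%:R
    = \sum_(i < n) \sum_b miss_prob P b ^+ i.+1.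
Proof.
move=> du_inj.
have shift_inj t : injective (fun i => shift_demand t d (u i)).
  by move=> i j; rewrite !ffunE => /addIr /du_inj.
under eq_bigr do rewrite (expect_card_uncached_bits P_sum1 (shift_inj _)).
rewrite exchange_big; apply: eq_bigr => i _.
rewrite -(sum_shift_file_bits (fun b => miss_prob P b ^+ i.+1) (d (u i))).
by apply: eq_bigr => t _; apply: eq_bigr => j _; rewrite ffunE.
Qed.

Lemma sum_shift_Rstar_d_ge (d : demand N.+1 K) (e : R) n (u : 'I_n -> 'I_K) :
  0 <= e -> (0 < F)%N -> 0 < M -> M <= N.+1%:R -> injective (fun i => d (u i)) ->
  N.+1%:R * ((N.+1%:R - M) / M * (1 - (1 - M / N.+1%:R) ^+ n)
              - (F%:R^-1 + n%:R ^+ 2 * e))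
    <= \sum_(t : 'I_N.+1) Rstar_d P (shift_demand t d) e.
Proof.
move=> e_ge0 F_gt0 M_gt0 M_le_N du_inj.
have N_pos : 0 < N.+1%:R :> R by rewrite ltr0n.
have F_pos : 0 < F%:R :> R by rewrite ltr0n.
set c := 1 - M / N.+1%:R.
have c_ge0 : 0 <= c by rewrite subr_ge0 ler_pdivrMr // mul1r.
have c_neq1 : c != 1.
  by rewrite -subr_eq0 addrAC subrr add0r oppr_eq0 mulf_neq0 ?invr_eq0 ?gt_eqF.
have geom : \sum_(i < n) c ^+ i.+1 = (N.+1%:R - M) / M * (1 - c ^+ n).
  by rewrite sum_exprS_geom // /c; field; rewrite -mulrS !gt_eqF.
have power_mean i : N.+1%:R * F%:R * c ^+ i.+1 <= \sum_b miss_prob P b ^+ i.+1.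
  have miss_ge0 b : 0 <= miss_prob P b by apply: sumr_ge0 => A _; rewrite mulr_ge0.
  have := @sum_exprS_ge _ (bitidx N.+1 F) (miss_prob P) c i miss_ge0 c_ge0.
  rewrite card_prod !card_ord natrM; apply.
  suff -> : N.+1%:R * F%:R * c = N.+1%:R * F%:R - M * F%:R by exact: sum_miss_prob_ge.
  by rewrite /c; field; rewrite -mulrS gt_eqF.
apply: le_trans (ler_sum _ (fun t _ =>
  Rstar_d_ge P_ge0 P_sum1 (shift_demand t d) u e_ge0 F_gt0)).
rewrite !sumrB -mulr_suml sum_shift_expect_card_uncached_bits // !sumr_const card_ord.
rewrite -geom opprD addrA !mulrBr -[F%:R^-1 *+ _]mulr_natl -[_ * e *+ _]mulr_natl !lerD2r.
rewrite ler_pdivlMr // mulr_sumr mulr_suml.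
by apply: ler_sum => i _; rewrite mulrAC.
Qed.

End ShiftedDemands.

Theorem lemma3 (R : realType) (N F K : nat) (M e : R)
  (P : {set bitidx N F} -> R) (d0 : demand N K) :
  0 < M -> M <= N%:R -> (0 < F)%N -> 0 < e ->
  is_prefetch_dist M P ->
  (N%:R - M) / M * (1 - (1 - M / N%:R) ^+ Ne (stats d0))
    - (F%:R^-1 + (Ne (stats d0))%:R ^+ 2 * e)
  <= Rstar_s K P (stats d0) e.
Proof.
move=> M_gt0 M_le_N F_gt0 e_gt0 [P_ge0 [P_sum1 P_size]].
case: N P d0 M_le_N P_ge0 P_sum1 P_size => [|N] P d0 M_le_N P_ge0 P_sum1 P_size.
  by have := lt_le_trans M_gt0 M_le_N; rewrite ltxx.
set D := demands_of N.+1 K (stats d0).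
have D_gt0 : (0 < #|D|)%N by apply/card_gt0P; exists d0; rewrite inE.
have N_pos : 0 < N.+1%:R :> R by rewrite ltr0n.
rewrite /Rstar_s -/D ler_pdivlMr ?ltr0n // -(ler_pM2l N_pos).
rewrite [X in _ <= X]mulr_natl -sum_shift_demands mulr_natr -[_ *+ #|D|]sumr_const mulr_sumr.
apply: ler_sum => d; rewrite inE => /eqP stats_d.
have [u du_inj] := exists_distinct_requesters d.
rewrite -stats_d.
exact: (sum_shift_Rstar_d_ge P_ge0 P_sum1 P_size (ltW e_gt0) F_gt0 M_gt0 M_le_N du_inj).
Qed.
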